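(* For all positive integers $n\geq 2$ and $t$, the double Roman domination number of $S(K_n,t)$ is $$\gamma_{dR}(S(K_n,t))=\begin{cases}3\left\lceil\frac{n^t}{n+1}\right\rceil & \text{if } t \text{ is odd},\\[2pt] 3\left\lceil\frac{n^t}{n+1}\right\rceil-1 & \text{if } t \text{ is even}.\end{cases}$$
   Context: For a positive integer $n$ let $[n]=\{1,\dots,n\}$. For positive integers $n,t$, the Sierpiński graph $S(K_n,t)$ is the simple graph with vertex set $[n]^t$ (words $v_1v_2\cdots v_t$ with $v_i\in[n]$), in which $u_1\cdots u_t$ and $v_1\cdots v_t$ are adjacent if and only if there is $s\in[t]$ with $u_j=v_j$ for all $j<s$, $u_s\neq v_s$, and $u_j=v_s$ and $v_j=u_s$ for all $j>s$. A double Roman dominating function on a graph $G=(V,E)$ is a function $f:V\to\{0,1,2,3\}$ such that (i) every vertex $u$ with $f(u)=0$ has either a neighbor $v$ with $f(v)=3$ or two distinct neighbors $w,x$ with $f(w)=f(x)=2$, and (ii) every vertex $u$ with $f(u)=1$ has a neighbor $v$ with $f(v)\geq 3$. Its weight is $\sum_{v\in V}f(v)$, and the double Roman domination number $\gamma_{dR}(G)$ is the minimum weight of a double Roman dominating function on $G$. *)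

From mathcomp Require Import all_boot all_order.
Set Implicit Arguments. Unset Strict Implicit. Unset Printing Implicit Defensive.

Definition weight (T : finType) (f : {ffun T -> 'I_4}) : nat :=
  \sum_(v : T) (f v : nat).

Definition is_drdf (T : finType) (adj : rel T) (f : {ffun T -> 'I_4}) : bool :=
  [forall u : T,
    ((f u == 0 :> nat) ==>
       ([exists v : T, adj u v && (f v == 3 :> nat)] ||
        [exists w : T, exists x : T,
           [&& w != x, adj u w, adj u x, f w == 2 :> nat & f x == 2 :> nat]]))
    && ((f u == 1 :> nat) ==> [exists v : T, adj u v && (3 <= f v)])].

(* gamma_dR = minimum weight of a DRDF; the constant-3 function is always a
   DRDF of weight 3*#|T|, so this default is harmless. *)
Definition gamma_dR (T : finType) (adj : rel T) : nat :=
  \big[minn/3 * #|T|]_(f : {ffun T -> 'I_4} | is_drdf adj f) weight f.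

(* Sierpinski graph S(K_n,t): vertices are words of length t over 'I_n
   (letters 0..n-1 stand for 1..n), positions indexed 0..t-1. *)
Definition sierp_adj (n t : nat) : rel (t.-tuple 'I_n) :=
  fun u v => [exists s : 'I_t,
    [&& [forall j : 'I_t, (j < s) ==> (tnth u j == tnth v j)],
        tnth u s != tnth v s &
        [forall j : 'I_t, (s < j) ==>
            ((tnth u j == tnth v s) && (tnth v j == tnth u s))]]].

From mathcomp Require Import all_boot all_order zify.
Set Implicit Arguments. Unset Strict Implicit. Unset Printing Implicit Defensive.

(* Lower bound, by discharging.  In a DRDF f every vertex labelled 3 sends
   charge 2 and every vertex labelled 2 sends charge 1 to each neighbour; the
   DRDF conditions say exactly that each vertex labelled 0 or 1 receives at
   least 2.  As S(K_n,t) has maximum degree n, double counting gives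
     2 (c_0 + c_1) + surplus + slack = n (2 c_3 + c_2)
   for the numbers c_k of vertices labelled k, which forces the weight
   c_1 + 2 c_2 + 3 c_3 to be at least 3 n^t / (n+1).  A weight just below the
   claimed value is only possible in an equality case (no surplus, no slack,
   few vertices labelled 2), and these are excluded by the local structure of
   S(K_n,t): two non-adjacent vertices have at most two common neighbours, and
   S(K_2,t) is a path.

   Upper bound.  The words accepted by a four-state automaton form a code of
   size (n^t + 1)/(n+1) dominating every vertex when t is odd, and of size
   (n^t - 1)/(n+1) dominating every vertex but one extreme vertex when t is
   even; labelling the code 3 (and that extreme vertex 2) gives a DRDF of the
   required weight. *)

Definition degree (T : finType) (adj : rel T) (u : T) : nat :=
  \sum_v (adj u v : nat).

Lemma sum_indicator_card (T : finType) (P : pred T) :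
  \sum_v (P v : nat) = #|[set v | P v]|.
Proof.
rewrite -sum1_card [RHS]big_mkcond /=; apply: eq_bigr => v _; rewrite inE.
by case: (P v).
Qed.

Section SierpinskiStructure.

Variable n : nat.

Definition extreme t (u : t.-tuple 'I_n) : bool :=
  [exists c, u == [tuple of nseq t c]].

Lemma nseq_tupleS t (c : 'I_n) :
  [tuple of nseq t.+1 c] = [tuple of c :: [tuple of nseq t c]].
Proof. exact: val_inj. Qed.

Lemma tuple0_nseq (v : 0.-tuple 'I_n) (c : 'I_n) : v = [tuple of nseq 0 c].
Proof. by apply: val_inj; exact: size0nil (size_tuple v). Qed.

Lemma nseq_tuple_inj t (a b : 'I_n) :
  [tuple of nseq t.+1 a] = [tuple of nseq t.+1 b] -> a = b.
Proof. by move/(congr1 val) => /= [->]. Qed.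

Lemma sierp_adj_sym t : symmetric (@sierp_adj n t).
Proof.
suff imp u v : sierp_adj u v -> @sierp_adj n t v u.
  by move=> u v; apply/idP/idP; apply: imp.
case/existsP=> s /and3P [pre diff post]; apply/existsP; exists s.
apply/and3P; split.
- by apply/forallP => j; apply/implyP => /(implyP (forallP pre j)); rewrite eq_sym.
- by rewrite eq_sym.
- by apply/forallP => j; apply/implyP => /(implyP (forallP post j)); rewrite andbC.
Qed.

(* Recursive description of the edges: a.u ~ b.v iff either a = b and u ~ v in
   the copy of S(K_n,t) indexed by a, or a <> b and the edge is the bridge
   between the copies a and b, joining a.b...b to b.a...a. *)
Lemma sierp_adj_cons t (a b : 'I_n) (u v : t.-tuple 'I_n) :
  @sierp_adj n t.+1 [tuple of a :: u] [tuple of b :: v] =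
  ((a == b) && sierp_adj u v) ||
  [&& a != b, u == [tuple of nseq t b] & v == [tuple of nseq t a]].
Proof.
apply/existsP/idP.
- case=> s /and3P [pre diff post].
  case: (unliftP ord0 s) => [s'|] eq_s; subst s; last first.
    move: diff; rewrite !tnth0 => -> /=; apply/orP; right.
    apply/andP; split; apply/eqP/eq_from_tnth => j; rewrite tnth_nseq;
    have := forallP post (lift ord0 j); rewrite !tnthS !tnth0 lift0 /= =>
      /andP [/eqP eq_uj /eqP eq_vj] //.
  have -> : a == b by have := forallP pre ord0; rewrite !tnth0 lift0.
  apply/orP; left; apply/existsP; exists s'; apply/and3P; split.
  + apply/forallP => j; apply/implyP => lt_js.
    by have := forallP pre (lift ord0 j); rewrite !tnthS !lift0 ltnS lt_js.
  + by move: diff; rewrite !tnthS.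
  + apply/forallP => j; apply/implyP => lt_sj.
    by have := forallP post (lift ord0 j); rewrite !tnthS !lift0 ltnS lt_sj.
- case/orP => [/andP [/eqP <- /existsP [s /and3P [pre diff post]]] |
               /and3P [neq_ab /eqP -> /eqP ->]].
  + exists (lift ord0 s); apply/and3P; split.
    * apply/forallP => j; apply/implyP; case: (unliftP ord0 j) => [j'|] ->;
        last by rewrite !tnth0.
      by rewrite !lift0 ltnS !tnthS => /(implyP (forallP pre j')).
    * by rewrite !tnthS.
    * apply/forallP => j; apply/implyP; case: (unliftP ord0 j) => [j'|] ->;
        last by rewrite lift0.
      by rewrite !lift0 ltnS !tnthS => /(implyP (forallP post j')).
  + exists ord0; apply/and3P; split.
    * by apply/forallP => j; rewrite ltn0.
    * by rewrite !tnth0.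
    * apply/forallP => j; apply/implyP; case: (unliftP ord0 j) => [j'|] ->;
        last by rewrite ltnn.
      by rewrite !tnthS !tnth0 !tnth_nseq !eqxx.
Qed.

Lemma sum_tuple_cons t (F : t.+1.-tuple 'I_n -> nat) :
  \sum_(v : t.+1.-tuple 'I_n) F v =
  \sum_(a : 'I_n) \sum_(u : t.-tuple 'I_n) F [tuple of a :: u].
Proof.
rewrite pair_big /=.
rewrite (reindex (fun p : 'I_n * t.-tuple 'I_n => [tuple of p.1 :: p.2])) //=.
exists (fun v : t.+1.-tuple 'I_n => (thead v, [tuple of behead v])).
- by move=> [a u] _ /=; congr pair; apply/val_inj.
- by move=> v _ /=; rewrite [RHS]tuple_eta.
Qed.

Lemma extreme_cons t (a : 'I_n) (u : t.-tuple 'I_n) :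
  extreme [tuple of a :: u] = (u == [tuple of nseq t a]).
Proof.
apply/existsP/idP => [[c]|eq_u]; last by exists a; rewrite (eqP eq_u) nseq_tupleS.
by rewrite nseq_tupleS -val_eqE /= eqseq_cons => /andP [/eqP ->].
Qed.

(* A nonempty word equals c...c for at most one letter c. *)
Lemma sum_nseq_indicator t (u : t.+1.-tuple 'I_n) :
  \sum_b ((u == [tuple of nseq t.+1 b]) : nat) = extreme u.
Proof.
case: (boolP (extreme u)) => [/existsP [c /eqP ->] | not_ext]; last first.
  by apply/eqP; rewrite sum_nat_eq0; apply/forallP => b; rewrite eqb0;
    apply: contra not_ext => ext_b; apply/existsP; exists b.
rewrite (bigD1 c) //= eqxx big1 // => b neq_bc; apply/eqP; rewrite eqb0.
by apply: contra neq_bc => /eqP /nseq_tuple_inj ->.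
Qed.

Lemma sierp_degree_cons t (a : 'I_n) (u : t.-tuple 'I_n) :
  degree (@sierp_adj n t.+1) [tuple of a :: u] =
  degree (@sierp_adj n t) u + \sum_(b | b != a) ((u == [tuple of nseq t b]) : nat).
Proof.
rewrite /degree sum_tuple_cons (bigD1 a) //=; congr addn.
  by apply: eq_bigr => w _; rewrite sierp_adj_cons eqxx /= orbF.
apply: eq_bigr => b neq_ba; rewrite (bigD1 [tuple of nseq t a]) //= big1.
  by rewrite sierp_adj_cons eq_sym (negbTE neq_ba) !eqxx andbT addn0.
by move=> w neq_w; rewrite sierp_adj_cons eq_sym (negbTE neq_ba) (negbTE neq_w) andbF.
Qed.

Lemma sierp_degree0 (u : 0.-tuple 'I_n) : degree (@sierp_adj n 0) u = 0.
Proof.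
by apply/eqP; rewrite sum_nat_eq0; apply/forallP => v; rewrite eqb0;
  apply/negP => /existsP [[]].
Qed.

(* Every vertex of S(K_n,t) has degree at most n, extreme vertices at most
   n - 1; the stronger form is the one that survives the induction on t. *)
Lemma sierp_degree_extreme_le t (u : t.-tuple 'I_n) :
  0 < n -> degree (@sierp_adj n t) u + extreme u <= n.
Proof.
move=> n_gt0; elim: t u => [|t IH] u.
  by rewrite sierp_degree0; case: (extreme u).
case/tupleP: u => a w; rewrite sierp_degree_cons extreme_cons -addnA.
rewrite [X in _ + X](_ : _ = \sum_b ((w == [tuple of nseq t b]) : nat)); last first.
  by rewrite [RHS](bigD1 a) //= addnC.
case: t IH w => [|t] IH w; last by rewrite sum_nseq_indicator.
rewrite (eq_bigr (fun _ => 1)) ?sum1_card ?card_ord; last first.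
  by move=> b _; rewrite (tuple0 w) -val_eqE.
by rewrite sierp_degree0.
Qed.

Lemma sierp_degree_le t (u : t.-tuple 'I_n) :
  0 < n -> degree (@sierp_adj n t) u <= n.
Proof.
by move=> n_gt0; apply: leq_trans (sierp_degree_extreme_le u n_gt0); exact: leq_addr.
Qed.

Lemma sierp_common_neighbour_bridge t (a b : 'I_n) (p q : t.-tuple 'I_n)
    (r : t.+1.-tuple 'I_n) :
  a != b -> ~~ sierp_adj [tuple of a :: p] [tuple of b :: q] ->
  sierp_adj [tuple of a :: p] r -> sierp_adj [tuple of b :: q] r ->
  r = [tuple of a :: nseq t b] \/ r = [tuple of b :: nseq t a].
Proof.
move=> neq_ab not_adj; case/tupleP: r => c r; rewrite !sierp_adj_cons.
case/orP => [/andP [/eqP eq_ac _] | /and3P [_ /eqP eq_p /eqP eq_r]];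
case/orP => [/andP [/eqP eq_bc _] | /and3P [_ /eqP eq_q /eqP eq_r']].
- by subst; rewrite eqxx in neq_ab.
- by left; subst.
- by right; subst.
- case: t p q r eq_p eq_q eq_r eq_r' not_adj => [|t] p q r eq_p eq_q eq_r eq_r'.
    by rewrite sierp_adj_cons neq_ab (tuple0_nseq p b) (tuple0_nseq q a) !eqxx orbT.
  by move: neq_ab; rewrite -(nseq_tuple_inj (etrans (esym eq_r) eq_r')) eqxx.
Qed.

Lemma sierp_no_three_common_neighbours t (p q r1 r2 r3 : t.-tuple 'I_n) :
  p != q -> ~~ sierp_adj p q ->
  sierp_adj p r1 -> sierp_adj q r1 -> sierp_adj p r2 -> sierp_adj q r2 ->
  sierp_adj p r3 -> sierp_adj q r3 ->
  r1 != r2 -> r2 != r3 -> r3 != r1 -> False.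
Proof.
elim: t p q r1 r2 r3 => [|t IH] p q r1 r2 r3 neq_pq not_adj; first by move=> /existsP [[]].
case/tupleP: p neq_pq not_adj => a p; case/tupleP: q => b q neq_pq not_adj.
case: (eqVneq a b) => [eq_ab | neq_ab]; last first.
  move=> pr1 qr1 pr2 qr2 pr3 qr3.
  case: (sierp_common_neighbour_bridge neq_ab not_adj pr1 qr1) => ->;
  case: (sierp_common_neighbour_bridge neq_ab not_adj pr2 qr2) => ->;
  case: (sierp_common_neighbour_bridge neq_ab not_adj pr3 qr3) => ->;
  by rewrite ?eqxx.
subst b; have neq_pq' : p != q by apply: contra neq_pq => /eqP ->.
have inside (r : t.+1.-tuple 'I_n) :
    sierp_adj [tuple of a :: p] r -> sierp_adj [tuple of a :: q] r ->
    exists2 s : t.-tuple 'I_n, r = [tuple of a :: s] & sierp_adj p s && sierp_adj q s.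
  case/tupleP: r => c s; rewrite !sierp_adj_cons.
  case/orP => [/andP [/eqP eq_ac ps] | /and3P [neq_ac /eqP eq_p _]];
  case/orP => [/andP [/eqP eq_ac' qs] | /and3P [neq_ac' /eqP eq_q _]].
  - by exists s; rewrite ?eq_ac ?ps.
  - by rewrite eq_ac eqxx in neq_ac'.
  - by rewrite eq_ac' eqxx in neq_ac.
  - by move: neq_pq'; rewrite eq_p eq_q eqxx.
move=> pr1 qr1 pr2 qr2 pr3 qr3.
have [s1 -> /andP [ps1 qs1]] := inside _ pr1 qr1.
have [s2 -> /andP [ps2 qs2]] := inside _ pr2 qr2.
have [s3 -> /andP [ps3 qs3]] := inside _ pr3 qr3.
have lift_neq (x y : t.-tuple 'I_n) : [tuple of a :: x] != [tuple of a :: y] -> x != y.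
  by apply: contra => /eqP ->.
move=> /lift_neq d12 /lift_neq d23 /lift_neq d31.
apply: (IH p q s1 s2 s3) => //.
by move: not_adj; rewrite sierp_adj_cons eqxx /= orbF.
Qed.

End SierpinskiStructure.

(* For n = 2, reading a word as a binary number orders the vertices along a
   path: S(K_2,t) is the path 0...0 - ... - 1...1. *)
Fixpoint binary_value (s : seq 'I_2) : nat :=
  if s is a :: s' then a * 2 ^ size s' + binary_value s' else 0.

Lemma binary_value_lt t (u : t.-tuple 'I_2) : binary_value u < 2 ^ t.
Proof.
elim: t u => [|t IH] u; first by rewrite (tuple0 u).
case/tupleP: u => a u; rewrite /= size_tuple expnS.
by have := IH u; case: a => [[|[|]]] //= _; lia.
Qed.

Lemma binary_value_nseq t (c : 'I_2) : binary_value (nseq t c) + c = c * 2 ^ t.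
Proof.
elim: t => [|t IH]; first by rewrite /= muln1.
by rewrite /= size_nseq expnS; lia.
Qed.

Lemma binary_value_inj t : injective (fun u : t.-tuple 'I_2 => binary_value u).
Proof.
elim: t => [|t IH] u v; first by rewrite (tuple0 u) (tuple0 v).
case/tupleP: u => a u; case/tupleP: v => b v => /= E; rewrite !size_tuple in E.
have lt_u := binary_value_lt u; have lt_v := binary_value_lt v.
have eq_ab : a = b.
  by apply/val_inj; move: E lt_u lt_v; case: a => [[|[|]]] //; case: b => [[|[|]]] //= *; lia.
by subst b; rewrite (IH u v) //; lia.
Qed.

Lemma binary_value_adj t (u v : t.-tuple 'I_2) :
  sierp_adj u v ->
  binary_value v = binary_value u + 1 \/ binary_value u = binary_value v + 1.
Proof.
elim: t u v => [|t IH] u v; first by move=> /existsP [[]].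
case/tupleP: u => a u; case/tupleP: v => b v; rewrite sierp_adj_cons.
case/orP => [/andP [/eqP <- /IH adj_uv] | /and3P [neq_ab /eqP -> /eqP ->]].
  by rewrite /= !size_tuple; lia.
rewrite /= !size_nseq.
have := binary_value_nseq t a; have := binary_value_nseq t b.
by move: neq_ab; case: a => [[|[|]]] //; case: b => [[|[|]]] //= *; lia.
Qed.

Lemma sierp2_successor t (p : t.-tuple 'I_2) :
  degree (@sierp_adj 2 t) p = 2 ->
  exists2 r, sierp_adj p r & binary_value r = binary_value p + 1.
Proof.
move=> deg_p; case: (pickP [pred r | @sierp_adj 2 t p r &&
    (binary_value r == binary_value p + 1)]) => [r /andP [adj_pr /eqP succ_r] | no_succ].
  by exists r.
have pred_nbrs : [set r | @sierp_adj 2 t p r] \subset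
                 [set r : t.-tuple 'I_2 | binary_value r + 1 == binary_value p].
  apply/subsetP => r; rewrite !inE => adj_pr.
  have := no_succ r; rewrite /= adj_pr /=.
  by case: (binary_value_adj adj_pr) => ->; rewrite eqxx.
have : #|[set r : t.-tuple 'I_2 | binary_value r + 1 == binary_value p]| <= 1.
  rewrite leqNgt; apply/negP => /card_gt1P [x [y [+ + neq_xy]]]; rewrite !inE.
  move=> /eqP ex /eqP ey; move: neq_xy; rewrite (@binary_value_inj t x y) ?eqxx //; lia.
move/(leq_trans (subset_leq_card pred_nbrs)).
by rewrite -sum_indicator_card -/(degree _ p) deg_p.
Qed.

(* The codes used for the upper bound are recognised by an automaton reading
   a word letter by letter.  A state describes which extreme vertices of the
   current copy the code must contain or dominate:
   - [AllExt]: the code contains every extreme vertex (and dominates everything);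
   - [HitExt m]: the code contains the extreme vertex m...m and dominates
     everything;
   - [MissExt m]: the code dominates everything except the extreme vertex m...m;
   - [NoExt]: the code dominates every non-extreme vertex.
   [HitExt] and [NoExt] are used for odd word lengths, [AllExt] and [MissExt]
   for even ones; see [dom_odd] and [dom_even]. *)
Inductive code_state (n : nat) :=
  AllExt | HitExt of 'I_n | MissExt of 'I_n | NoExt.
Arguments AllExt {n}. Arguments NoExt {n}.

Definition code_step n (st : code_state n) (a : 'I_n) : code_state n :=
  match st with
  | AllExt => HitExt a
  | HitExt m => if a == m then AllExt else MissExt m
  | MissExt m => if a == m then NoExt else HitExt m
  | NoExt => MissExt a
  end.

Fixpoint accepts n (st : code_state n) (s : seq 'I_n) : bool :=
  if s is a :: s' then accepts (code_step st a) s' else if st is AllExt then true else false.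

Section Codes.

Variable n : nat.

Definition dominated t (st : code_state n) (v : t.-tuple 'I_n) : bool :=
  accepts st v || [exists w : t.-tuple 'I_n, sierp_adj v w && accepts st w].

Definition code_size t (st : code_state n) : nat :=
  \sum_(v : t.-tuple 'I_n) (accepts st v : nat).

Lemma dominated_cons t (st : code_state n) (a : 'I_n) (w : t.-tuple 'I_n) :
  dominated (code_step st a) w -> dominated st [tuple of a :: w].
Proof.
case/orP => [acc | /existsP [w' /andP [adj_ww' acc]]]; apply/orP; [by left | right].
apply/existsP; exists [tuple of a :: w']; rewrite sierp_adj_cons eqxx adj_ww'.
exact: acc.
Qed.

Lemma dominated_by t (st : code_state n) (v w : t.-tuple 'I_n) :
  sierp_adj v w -> accepts st w -> dominated st v.
Proof. by move=> adj_vw acc; apply/orP; right; apply/existsP; exists w; rewrite adj_vw. Qed.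

Definition dom_odd t : Prop :=
  [/\ forall m (v : t.-tuple 'I_n), dominated (HitExt m) v,
      forall m : 'I_n, accepts (HitExt m) (nseq t m) &
      forall v : t.-tuple 'I_n, ~~ extreme v -> dominated NoExt v].

Definition dom_even t : Prop :=
  [/\ forall v : t.-tuple 'I_n, dominated AllExt v,
      forall c : 'I_n, accepts AllExt (nseq t c) &
      forall m (v : t.-tuple 'I_n), v != [tuple of nseq t m] -> dominated (MissExt m) v].

Lemma dom_even0 : dom_even 0.
Proof.
split=> // [v|m v]; first by rewrite (tuple0 v).
by rewrite (tuple0_nseq v m) eqxx.
Qed.

Lemma dom_even_step t : dom_even t -> dom_odd t.+1.
Proof.
case=> domAll accAll domMiss; split.
- move=> m; case/tupleP => a w.
  case: (eqVneq a m) => [-> | neq_am].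
    by apply: dominated_cons; rewrite /= eqxx.
  case: (eqVneq w [tuple of nseq t m]) => [-> | neq_w]; last first.
    by apply: dominated_cons; rewrite /= (negbTE neq_am); exact: domMiss.
  (* a.m...m is the bridge neighbour of m.a...a, which is in the code. *)
  apply: (@dominated_by _ _ _ [tuple of m :: [tuple of nseq t a]]).
    by rewrite sierp_adj_cons (negbTE neq_am) !eqxx.
  by rewrite /= eqxx.
- by move=> m /=; rewrite eqxx.
- case/tupleP => a w; rewrite extreme_cons => neq_w.
  by apply: dominated_cons; exact: domMiss.
Qed.

Lemma dom_odd_step t : dom_odd t -> dom_even t.+1.
Proof.
case=> domHit accHit domNo; split.
- by case/tupleP => a w; apply: dominated_cons; exact: domHit.
- by move=> c; exact: accHit.
- move=> m; case/tupleP => a w neq_v.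
  case: (eqVneq a m) => [eq_am | neq_am]; last first.
    by apply: dominated_cons; rewrite /= (negbTE neq_am).
  subst a; case: (boolP (extreme w)) => [/existsP [c /eqP eq_w] | not_ext]; last first.
    by apply: dominated_cons; rewrite /= eqxx; exact: domNo.
  (* m.c...c is dominated by its bridge neighbour c.m...m. *)
  subst w; have neq_cm : c != m by apply: contra neq_v => /eqP ->; rewrite nseq_tupleS.
  apply: (@dominated_by _ _ _ [tuple of c :: [tuple of nseq t m]]).
    by rewrite sierp_adj_cons eq_sym neq_cm !eqxx orbT.
  by rewrite /= (negbTE neq_cm).
Qed.

Lemma code_domination t : if odd t then dom_odd t else dom_even t.
Proof.
elim: t => [|t IH]; first exact: dom_even0.
by rewrite /=; case: (odd t) IH => /=; [exact: dom_odd_step | exact: dom_even_step].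
Qed.

Definition size_odd t : Prop :=
  (forall m : 'I_n, n.+1 * code_size t (HitExt m) = n ^ t + 1) /\
  n.+1 * code_size t NoExt + n = n ^ t.

Definition size_even t : Prop :=
  n.+1 * code_size t AllExt = n ^ t + n /\
  (forall m : 'I_n, n.+1 * code_size t (MissExt m) + 1 = n ^ t).

Lemma code_size_cons t (st : code_state n) :
  code_size t.+1 st = \sum_a code_size t (code_step st a).
Proof. exact: sum_tuple_cons. Qed.

Lemma sum_const_off (m : 'I_n) (F : 'I_n -> nat) (c : nat) :
  (forall a, a != m -> F a = c) -> \sum_a F a = F m + (n - 1) * c.
Proof.
move=> F_off; rewrite (bigD1 m) //= (eq_bigr (fun _ => c)) //.
by rewrite sum_nat_const cardC1 card_ord subn1.
Qed.

Lemma sum_const_mul (F : 'I_n -> nat) (k c : nat) :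
  (forall a, k * F a = c) -> k * \sum_a F a = n * c.
Proof.
by move=> kF; rewrite big_distrr /= (eq_bigr (fun _ => c)) // sum_nat_const card_ord.
Qed.

Lemma size_even0 : size_even 0.
Proof.
split=> [|m]; last by rewrite /code_size big1 ?muln0 // => v _; rewrite (tuple0 v).
rewrite /code_size (eq_bigr (fun _ => 1)) => [|v _]; last by rewrite (tuple0 v).
by rewrite sum1_card card_tuple card_ord expn0 muln1.
Qed.

Lemma size_even_step t : 0 < n -> size_even t -> size_odd t.+1.
Proof.
move=> n_gt0 [sizeAll sizeMiss]; split.
- move=> m; rewrite code_size_cons (@sum_const_off m _ (code_size t (MissExt m))).
    by rewrite /= eqxx expnS; have := sizeMiss m; nia.
  by move=> a /negbTE /= ->.
- rewrite code_size_cons (@sum_const_mul _ n.+1 (n ^ t - 1)) => [|a].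
    by rewrite expnS mulnBr muln1 subnK // leq_pmulr // expn_gt0 n_gt0.
  by have := sizeMiss a; rewrite /=; lia.
Qed.

Lemma size_odd_step t : size_odd t -> size_even t.+1.
Proof.
move=> [sizeHit sizeNo]; split.
- rewrite code_size_cons (@sum_const_mul _ n.+1 (n ^ t + 1)) ?expnS; first lia.
  by move=> a; exact: sizeHit.
- move=> m; rewrite code_size_cons (@sum_const_off m _ (code_size t (HitExt m))).
    by rewrite /= eqxx expnS; have := sizeHit m; have := ltn_ord m; nia.
  by move=> a /negbTE /= ->.
Qed.

Lemma code_sizes t : 0 < n -> if odd t then size_odd t else size_even t.
Proof.
move=> n_gt0; elim: t => [|t IH]; first exact: size_even0.
rewrite /=; case: (odd t) IH => /=; [exact: size_odd_step | exact: size_even_step].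
Qed.

End Codes.

Section DoubleRomanDomination.

Variables (T : finType) (adj : rel T).

Lemma gamma_dR_le (f : {ffun T -> 'I_4}) : is_drdf adj f -> gamma_dR adj <= weight f.
Proof.
by move=> drdf_f; rewrite /gamma_dR -minEnat;
  exact: (Order.TotalTheory.bigmin_le_cond (3 * #|T|) (@weight T) drdf_f).
Qed.

Lemma gamma_dR_ge (L : nat) : L <= 3 * #|T| ->
  (forall f, is_drdf adj f -> L <= weight f) -> L <= gamma_dR adj.
Proof.
move=> le_L lb; apply: (big_ind (fun m => L <= m)) => // a b le_La le_Lb.
by rewrite leq_min le_La.
Qed.

Lemma code_drdf (C Z : pred T) :
  (forall u, [|| C u, Z u | [exists v, adj u v && C v]]) ->
  exists2 f : {ffun T -> 'I_4}, is_drdf adj f &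
    weight f <= 3 * \sum_v (C v : nat) + 2 * \sum_v (Z v : nat).
Proof.
pose o3 : 'I_4 := Ordinal (isT : 3 < 4); pose o2 : 'I_4 := Ordinal (isT : 2 < 4).
pose o0 : 'I_4 := Ordinal (isT : 0 < 4).
move=> covered; exists [ffun v => if C v then o3 else if Z v then o2 else o0].
  apply/forallP => u; rewrite !ffunE.
  case Cu: (C u) => //; case Zu: (Z u) => //=.
  have /existsP [v /andP [adj_uv Cv]] : [exists v, adj u v && C v].
    by have := covered u; rewrite Cu Zu.
  by rewrite andbT; apply/orP; left; apply/existsP; exists v; rewrite ffunE adj_uv Cv.
rewrite /weight !big_distrr -big_split /=; apply: leq_sum => v _; rewrite ffunE.
by case: (C v); case: (Z v).
Qed.

Definition charge (f : {ffun T -> 'I_4}) (v : T) : nat :=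
  if (f v : nat) == 3 then 2 else if (f v : nat) == 2 then 1 else 0.

Definition received (f : {ffun T -> 'I_4}) (u : T) : nat :=
  \sum_v (adj u v : nat) * charge f v.

Definition demand (f : {ffun T -> 'I_4}) (u : T) : nat :=
  if (f u : nat) <= 1 then 2 else 0.

Definition label_count (f : {ffun T -> 'I_4}) (k : nat) : nat :=
  \sum_v (((f v : nat) == k) : nat).

Definition surplus (f : {ffun T -> 'I_4}) : nat :=
  \sum_u (received f u - demand f u).

Definition slack (f : {ffun T -> 'I_4}) (d : nat) : nat :=
  \sum_v charge f v * (d - degree adj v).

Lemma term_le_sum (F : T -> nat) (v : T) : F v <= \sum_u F u.
Proof. by rewrite (bigD1 v) //= leq_addr. Qed.

Lemma demand_le_received (f : {ffun T -> 'I_4}) (u : T) :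
  is_drdf adj f -> demand f u <= received f u.
Proof.
move=> /forallP /(_ u) /andP [cond0 cond1]; rewrite /demand.
case: ifP => // le_fu1.
have via3 v : adj u v -> (f v : nat) == 3 -> 2 <= received f u.
  by move=> adj_uv fv3; apply: leq_trans (term_le_sum _ v); rewrite adj_uv /charge fv3.
have: ((f u : nat) == 0) || ((f u : nat) == 1) by case: (f u : nat) le_fu1 => [|[|]].
case/orP => [fu0 | fu1].
- case/orP: (implyP cond0 fu0) => [/existsP [v /andP [adj_uv fv3]] |
                                    /existsP [w /existsP [x]]]; first exact: via3 adj_uv fv3.
  case/and5P => neq_wx adj_uw adj_ux fw2 fx2.
  rewrite /received (bigD1 w) //= (bigD1 x) /=; last by rewrite eq_sym.
  by rewrite adj_uw adj_ux /charge (eqP fw2) (eqP fx2) /= addnA leq_addr.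
- case/existsP: (implyP cond1 fu1) => v /andP [adj_uv fv_ge3].
  by apply: (via3 v adj_uv); have := ltn_ord (f v); move: fv_ge3; lia.
Qed.

Lemma label_counts (f : {ffun T -> 'I_4}) :
  [/\ #|T| = label_count f 0 + label_count f 1 + label_count f 2 + label_count f 3,
      weight f = label_count f 1 + 2 * label_count f 2 + 3 * label_count f 3,
      \sum_u demand f u = 2 * (label_count f 0 + label_count f 1) &
      \sum_u charge f u = 2 * label_count f 3 + label_count f 2].
Proof.
rewrite /label_count /weight /demand /charge -sum1_card big_mkcond /=.
rewrite !big_distrr -!big_split big_distrr /=.
split; apply: eq_bigr => v _; by case: (f v) => [[|[|[|[|]]]]].
Qed.

Hypothesis adj_sym : symmetric adj.
Variable d : nat.
Hypothesis max_degree : forall v, degree adj v <= d.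

(* Double counting the discharging: demanded charge plus surplus equals the
   charge actually sent, which is the maximal possible charge d (2 c_3 + c_2)
   minus the slack. *)
Lemma discharging_balance (f : {ffun T -> 'I_4}) : is_drdf adj f ->
  2 * (label_count f 0 + label_count f 1) + surplus f + slack f d =
  d * (2 * label_count f 3 + label_count f 2).
Proof.
move=> drdf_f; case: (label_counts f) => _ _ <- <-.
have -> : \sum_u demand f u + surplus f = \sum_u received f u.
  rewrite /surplus -big_split /=; apply: eq_bigr => u _.
  by rewrite subnKC // demand_le_received.
rewrite /received exchange_big /slack -big_split big_distrr /=.
apply: eq_bigr => v _; rewrite -big_distrl /=.
have -> : \sum_u (adj u v : nat) = degree adj v by apply: eq_bigr => u _; rewrite adj_sym.
by rewrite mulnC -mulnDr subnKC ?max_degree // mulnC.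
Qed.

Lemma received_eq_demand (f : {ffun T -> 'I_4}) (u : T) :
  is_drdf adj f -> surplus f = 0 -> received f u = demand f u.
Proof.
move=> drdf_f /eqP; rewrite /surplus sum_nat_eq0 => /forallP /(_ u) /implyP /(_ isT).
by rewrite subn_eq0 => le_rd; apply/eqP; rewrite eqn_leq le_rd demand_le_received.
Qed.

Lemma charged_full_degree (f : {ffun T -> 'I_4}) (v : T) :
  slack f d = 0 -> 0 < charge f v -> degree adj v = d.
Proof.
move=> /eqP; rewrite /slack sum_nat_eq0 => /forallP /(_ v) /implyP /(_ isT).
rewrite muln_eq0 => /orP [/eqP -> // | ]; rewrite subn_eq0 => le_d _.
by apply/eqP; rewrite eqn_leq max_degree le_d.
Qed.

(* Without surplus, a vertex labelled 2 receives no charge, so its neighbours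
   are uncharged ... *)
Lemma tight_neighbour_uncharged (f : {ffun T -> 'I_4}) (p r : T) :
  is_drdf adj f -> surplus f = 0 -> (f p : nat) = 2 -> adj p r -> charge f r = 0.
Proof.
move=> drdf_f no_surplus fp2 adj_pr; have := received_eq_demand p drdf_f no_surplus.
rewrite /demand fp2 /received => /eqP; rewrite sum_nat_eq0 => /forallP /(_ r).
by rewrite adj_pr mul1n => /eqP.
Qed.

(* ... and each uncharged neighbour r of a vertex p labelled 2 receives its
   demand 2 as 1 from p plus 1 from exactly one other vertex labelled 2. *)
Lemma tight_second_two (f : {ffun T -> 'I_4}) (p r : T) :
  is_drdf adj f -> surplus f = 0 -> (f p : nat) = 2 -> adj r p -> charge f r = 0 ->
  exists v, [/\ v != p, adj r v & (f v : nat) = 2].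
Proof.
move=> drdf_f no_surplus fp2 adj_rp charge_r.
have fr_le1 : (f r : nat) <= 1.
  by move: charge_r; rewrite /charge; have := ltn_ord (f r); case: (f r : nat) => [|[|[|[|]]]].
have := received_eq_demand r drdf_f no_surplus.
have charge_p : charge f p = 1 by rewrite /charge fp2.
rewrite /demand fr_le1 /received (bigD1 p) //= adj_rp charge_p => rec_r.
have others : \sum_(v | v != p) (adj r v : nat) * charge f v = 1 by lia.
have [v /andP [neq_vp pos_v]] : exists v, (v != p) && (0 < (adj r v : nat) * charge f v).
  apply/existsP; apply: contraT; rewrite negb_exists => /forallP none.
  move: others; rewrite big1 // => v neq_vp; have := none v; rewrite neq_vp /=.
  by rewrite lt0n negbK => /eqP.
have le1 : (adj r v : nat) * charge f v <= 1 by rewrite -others (bigD1 v) //= leq_addr.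
exists v; move: pos_v le1; rewrite /charge; case: (adj r v) => //=; rewrite mul1n.
by have := ltn_ord (f v); case: (f v : nat) => [|[|[|[|]]]].
Qed.

End DoubleRomanDomination.

(* For n >= 3, the equality case of the discharging with exactly two vertices
   p, q labelled 2 would make p, q non-adjacent with n >= 3 common neighbours. *)
Lemma no_tight_drdf_two_twos n t (f : {ffun t.-tuple 'I_n -> 'I_4}) :
  2 < n -> is_drdf (@sierp_adj n t) f -> surplus (@sierp_adj n t) f = 0 ->
  slack (@sierp_adj n t) f n = 0 -> label_count f 2 = 2 -> False.
Proof.
move=> n_gt2 drdf_f no_surplus no_slack.
have max_deg v : degree (@sierp_adj n t) v <= n by apply: sierp_degree_le; lia.
rewrite /label_count sum_indicator_card; set S := [set v | _] => card_S.
have [p Sp] : exists p, p \in S by apply/card_gt0P; rewrite card_S.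
have /cards1P [q S_pq] : #|S :\ p| == 1.
  by move: card_S; rewrite (cardsD1 p S) Sp add1n => -[->].
have Sq : q \in S :\ p by rewrite S_pq set11.
have [fp2 [neq_qp fq2]] : (f p : nat) = 2 /\ q != p /\ (f q : nat) = 2.
  by move: Sp Sq; rewrite !inE => /eqP -> /andP [-> /eqP ->].
have only_q v : (f v : nat) = 2 -> v != p -> v = q.
  by move=> fv2 neq_vp; apply/set1P; rewrite -S_pq !inE neq_vp fv2.
have common r : sierp_adj p r -> sierp_adj q r.
  move=> adj_pr; have unch := tight_neighbour_uncharged drdf_f no_surplus fp2 adj_pr.
  have [v [neq_vp adj_rv fv2]] :=
    tight_second_two drdf_f no_surplus fp2 (etrans (sierp_adj_sym _ _) adj_pr) unch.
  by rewrite sierp_adj_sym -(only_q v fv2 neq_vp).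
have not_adj : ~~ sierp_adj p q.
  by apply/negP => adj_pq; have := tight_neighbour_uncharged drdf_f no_surplus fp2 adj_pq;
    rewrite /charge fq2.
have deg_p : degree (@sierp_adj n t) p = n.
  by apply: (charged_full_degree max_deg no_slack); rewrite /charge fp2.
have : 2 < #|[set r | @sierp_adj n t p r]| by rewrite -sum_indicator_card -/(degree _ p) deg_p.
case/card_gt2P => r1 [r2 [r3 [[] ]]]; rewrite !inE => pr1 pr2 pr3 [d12 d23 d31].
apply: (sierp_no_three_common_neighbours _ not_adj pr1 (common _ pr1) pr2 (common _ pr2)
          pr3 (common _ pr3)) => //.
by rewrite eq_sym.
Qed.

(* For n = 2, in the equality case the vertex labelled 2 that lies furthest
   along the path S(K_2,t) would have another vertex labelled 2 beyond it. *)
Lemma no_tight_drdf_path t (f : {ffun t.-tuple 'I_2 -> 'I_4}) :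
  is_drdf (@sierp_adj 2 t) f -> surplus (@sierp_adj 2 t) f = 0 ->
  slack (@sierp_adj 2 t) f 2 = 0 -> 0 < label_count f 2 -> False.
Proof.
move=> drdf_f no_surplus no_slack.
have max_deg v : degree (@sierp_adj 2 t) v <= 2 by exact: sierp_degree_le.
rewrite /label_count sum_indicator_card => /card_gt0P [p0].
rewrite inE => /eqP fp0.
have [p /eqP fp2 p_max] := @arg_maxnP _ p0 (fun v => (f v : nat) == 2)
                             (fun v => binary_value v) (introT eqP fp0).
have deg_p : degree (@sierp_adj 2 t) p = 2.
  by apply: (charged_full_degree max_deg no_slack); rewrite /charge fp2.
have [r adj_pr succ_r] := sierp2_successor deg_p.
have unch := tight_neighbour_uncharged drdf_f no_surplus fp2 adj_pr.
have [v [neq_vp adj_rv fv2]] :=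
  tight_second_two drdf_f no_surplus fp2 (etrans (sierp_adj_sym _ _) adj_pr) unch.
have /= le_vp := p_max v (introT eqP fv2).
case: (binary_value_adj adj_rv) => [|eq_r]; first lia.
have eq_pv : binary_value p = binary_value v.
  by apply/eqP; rewrite -(eqn_add2r 1) -eq_r succ_r.
by move: neq_vp; rewrite (binary_value_inj eq_pv) eqxx.
Qed.

(* Arithmetic core of the lower bound, in terms of the label counts c_k, the
   surplus E and the slack D of a DRDF of S(K_n,t) with N = n^t vertices:
   a weight below the claimed value forces the equality case. *)
Lemma odd_weight_bound n N c0 c1 c2 c3 E D q : 2 <= n ->
  N = c0 + c1 + c2 + c3 -> 2 * (c0 + c1) + E + D = n * (2 * c3 + c2) ->
  n.+1 * q = N + 1 -> c1 + 2 * c2 + 3 * c3 < 3 * q ->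
  [/\ n = 2, E = 0, D = 0 & 0 < c2].
Proof.
move=> n_ge2 N_eq balance q_eq lt_w.
have scaled : 2 * n.+1 * (c1 + 2 * c2 + 3 * c3 + 1) <= 6 * N + 6.
  by have := leq_mul (leqnn (2 * n.+1)) lt_w; nia.
have nc2 : 2 * c2 <= n * c2 by rewrite leq_mul2r n_ge2 orbT.
have n2 : n = 2 by lia.
by subst n; split; lia.
Qed.

Lemma even_weight_bound n N c0 c1 c2 c3 E D e : 2 <= n ->
  N = c0 + c1 + c2 + c3 -> 2 * (c0 + c1) + E + D = n * (2 * c3 + c2) ->
  n.+1 * e + 1 = N -> c1 + 2 * c2 + 3 * c3 < 3 * e + 2 ->
  [/\ E = 0, D = 0, 0 < c2 & (2 < n -> c2 = 2)].
Proof.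
move=> n_ge2 N_eq balance e_eq lt_w.
have nc2 : 2 * c2 <= n * c2 by rewrite leq_mul2r n_ge2 orbT.
have identity : 2 * n.+1 * (3 * c3 + 2 * c2) + 2 * c2 =
                6 * n.+1 * e + 6 + 3 * (E + D) + n * c2 by lia.
have gt_3e : 3 * e < 3 * c3 + 2 * c2.
  rewrite ltnNge; apply/negP => le_3e.
  by have := leq_mul (leqnn (2 * n.+1)) le_3e; lia.
have sum_eq : 3 * c3 + 2 * c2 = 3 * e + 1 by lia.
rewrite sum_eq in identity.
have c2_ge2 : 2 <= c2 by lia.
have : (n - 2) * (c2 - 2) + 3 * (E + D) = 0 by rewrite mulnBl !mulnBr; nia.
by move/eqP; rewrite addn_eq0 muln_eq0 => /andP [/orP [] /eqP ? ?]; split; lia.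
Qed.

Lemma sierp_drdf_balance n t (f : {ffun t.-tuple 'I_n -> 'I_4}) :
  0 < n -> is_drdf (@sierp_adj n t) f ->
  n ^ t = label_count f 0 + label_count f 1 + label_count f 2 + label_count f 3 /\
  2 * (label_count f 0 + label_count f 1) + surplus (@sierp_adj n t) f +
    slack (@sierp_adj n t) f n = n * (2 * label_count f 3 + label_count f 2).
Proof.
move=> n_gt0 drdf_f; case: (label_counts f); rewrite card_tuple card_ord => -> _ _ _.
split=> //; apply: discharging_balance drdf_f => [|v]; first exact: sierp_adj_sym.
exact: sierp_degree_le.
Qed.

(* Odd t: the code of HitExt m has (n^t + 1)/(n+1) vertices and dominates
   everything, and no DRDF does better. *)
Lemma gamma_dR_odd n t q : 2 <= n -> odd t -> n.+1 * q = n ^ t + 1 ->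
  gamma_dR (@sierp_adj n t) = 3 * q.
Proof.
move=> n_ge2 odd_t q_eq; have n_gt0 : 0 < n by lia.
pose m : 'I_n := Ordinal n_gt0.
have := code_domination n t; have := code_sizes t n_gt0; rewrite odd_t.
move=> [/(_ m) size_m _] [dom_m _ _].
apply/eqP; rewrite eqn_leq; apply/andP; split.
  have [f drdf_f le_w] := @code_drdf _ (@sierp_adj n t) (accepts (HitExt m)) pred0
    (fun u => dom_m m u).
  apply: leq_trans (gamma_dR_le drdf_f) (leq_trans le_w _).
  by rewrite [X in 2 * X]big1 // -/(code_size t (HitExt m)) muln0 addn0; nia.
apply: gamma_dR_ge => [|f drdf_f]; first by rewrite card_tuple card_ord; nia.
case: (label_counts f) => _ -> _ _; rewrite leqNgt; apply/negP => lt_w.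
have [N_eq balance] := sierp_drdf_balance n_gt0 drdf_f.
have [n2 no_surplus no_slack twos] := odd_weight_bound n_ge2 N_eq balance q_eq lt_w.
by subst n; exact: no_tight_drdf_path drdf_f no_surplus no_slack twos.
Qed.

(* Even t: the code of MissExt m has (n^t - 1)/(n+1) vertices and dominates all
   but m...m, which gets the label 2; no DRDF does better. *)
Lemma gamma_dR_even n t e : 2 <= n -> ~~ odd t -> n.+1 * e + 1 = n ^ t ->
  gamma_dR (@sierp_adj n t) = 3 * e + 2.
Proof.
move=> n_ge2 even_t e_eq; have n_gt0 : 0 < n by lia.
pose m : 'I_n := Ordinal n_gt0.
have := code_domination n t; have := code_sizes t n_gt0; rewrite (negbTE even_t).
move=> [_ /(_ m) size_m] [_ _ dom_m].
apply/eqP; rewrite eqn_leq; apply/andP; split.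
  have covered (u : t.-tuple 'I_n) : [|| accepts (MissExt m) u,
      u == [tuple of nseq t m] | [exists v, sierp_adj u v && accepts (MissExt m) v]].
    case: (eqVneq u [tuple of nseq t m]) => [-> | neq_u]; first by rewrite orbT.
    by case/orP: (dom_m m u neq_u) => ->; rewrite ?orbT.
  have [f drdf_f le_w] := code_drdf covered.
  apply: leq_trans (gamma_dR_le drdf_f) (leq_trans le_w _).
  have one_extreme : \sum_v ((v == [tuple of nseq t m]) : nat) = 1.
    by rewrite (bigD1 [tuple of nseq t m]) //= eqxx big1 // => v /negbTE ->.
  by rewrite one_extreme -/(code_size t (MissExt m)); nia.
apply: gamma_dR_ge => [|f drdf_f]; first by rewrite card_tuple card_ord; nia.
case: (label_counts f) => _ -> _ _; rewrite leqNgt; apply/negP => lt_w.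
have [N_eq balance] := sierp_drdf_balance n_gt0 drdf_f.
have [no_surplus no_slack twos two_twos] :=
  even_weight_bound n_ge2 N_eq balance e_eq lt_w.
case: (ltnP 2 n) => [n_gt2 | n_le2].
  exact: no_tight_drdf_two_twos n_gt2 drdf_f no_surplus no_slack (two_twos n_gt2).
have n2 : n = 2 by lia.
by subst n; exact: no_tight_drdf_path drdf_f no_surplus no_slack twos.
Qed.

Theorem theorem3p3 (n t : nat) : 2 <= n -> 1 <= t ->
  gamma_dR (@sierp_adj n t) =
    (if odd t then 3 * ((n ^ t + n) %/ (n + 1))
     else 3 * ((n ^ t + n) %/ (n + 1)) - 1).
Proof.
move=> n_ge2 _; have n_gt0 : 0 < n by lia.
have := code_sizes t n_gt0; case: (boolP (odd t)) => [odd_t | even_t].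
  (* n^t + n = (n+1) q + (n - 1) with q the size of a perfect code. *)
  pose m : 'I_n := Ordinal n_gt0; case=> /(_ m) q_eq _.
  rewrite (gamma_dR_odd n_ge2 odd_t q_eq).
  have -> : n ^ t + n = code_size t (HitExt m) * (n + 1) + (n - 1) by lia.
  by rewrite divnMDl ?addn1 // divn_small ?addn0 //; lia.
(* n^t + n = (n+1)(e + 1) with e the size of a code missing one extreme vertex. *)
pose m : 'I_n := Ordinal n_gt0; case=> _ /(_ m) e_eq.
rewrite (gamma_dR_even n_ge2 even_t e_eq).
have -> : n ^ t + n = (code_size t (MissExt m)).+1 * (n + 1) by lia.
by rewrite mulnK ?addn1 //; lia.
Qed.
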